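(* Let $k\ge 2$ be an integer, let $(G,\sigma)$ be a signed graph, and let $\beta$ be a $\mathbb{Z}_{4k}$-pc-boundary of $2G$ such that $\beta(v)\equiv 2k\cdot p^+(v)\pmod{4k}$ for every $v\in V(G)$. If $2G$ admits a strongly connected $(4k,\beta)$-orientation, then $\phi_c(G,\sigma)<\frac{2k}{k-1}$.
   Context: Graphs may have parallel edges but no loops. A signed graph $(G,\sigma)$ has $\sigma:E(G)\to\{+1,-1\}$; $p^+(v)$ is the number of positive edges incident with $v$. $2G$ is obtained from $G$ by replacing every edge with two parallel edges. For a graph $H$ and a positive integer $m$, a $\mathbb{Z}_{2m}$-pc-boundary of $H$ is a map $\beta:V(H)\to\{0,\pm1,\dots,\pm m\}$ with $\beta(v)\equiv d_H(v)\pmod 2$ for all $v$ and $\sum_v\beta(v)\equiv0\pmod{2m}$; a $(2m,\beta)$-orientation is an orientation $D$ of $H$ with $d^+_D(v)-d^-_D(v)\equiv\beta(v)\pmod{2m}$ for all $v$. An orientation $D$ is strongly connected if $d^+_D(S)>0$ and $d^-_D(S)>0$ for every nonempty proper subset $S\subset V(H)$. For positive integers $p,q$ with $p$ even, a circular $\frac pq$-flow of $(G,\sigma)$ is a pair $(D,f)$ with $D$ an orientation of $G$ and $f:E(G)\to\mathbb{Z}$ such that $|f(e)|\in\{q,\dots,p-q\}$ for every positive edge, $|f(e)|\in\{0,\dots,\frac p2-q\}\cup\{\frac p2+q,\dots,p-1\}$ for every negative edge, and $\sum_{(v,w)\in D}f(vw)-\sum_{(u,v)\in D}f(uv)\equiv0\pmod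 p$ for every vertex $v$. The circular flow index $\phi_c(G,\sigma)$ is the minimum of $\frac pq$ over all circular $\frac pq$-flows of $(G,\sigma)$. *)

From HB Require Import structures.
From mathcomp Require Import all_boot all_order all_algebra.
Set Implicit Arguments. Unset Strict Implicit. Unset Printing Implicit Defensive.
Import Order.TTheory GRing.Theory Num.Theory.
Local Open Scope ring_scope.

(* A (multi)graph without loops is given by a finite vertex type V, a finite
   edge type E and two endpoint maps  end1 end2 : E -> V  with
   end1 e != end2 e  (parallel edges allowed, no loops).
   An orientation D : E -> bool orients e from end1 e to end2 e iff D e. *)

Section Graph.
Variables (V E : finType) (end1 end2 : E -> V).

Definition incident (e : E) (v : V) : bool := (end1 e == v) || (end2 e == v).

Definition deg (v : V) : nat := #|[set e | incident e v]|.

Definition tail (D : E -> bool) (e : E) : V := if D e then end1 e else end2 e.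
Definition head (D : E -> bool) (e : E) : V := if D e then end2 e else end1 e.

Definition outdeg (D : E -> bool) (v : V) : nat := #|[set e | tail D e == v]|.
Definition indeg (D : E -> bool) (v : V) : nat := #|[set e | head D e == v]|.

Definition pc_boundary (m : nat) (beta : V -> int) : Prop :=
  [/\ forall v, (`|beta v| <= m)%N,
      forall v, (beta v = (deg v)%:Z %[mod 2])%Z
    & (\sum_v beta v = 0 %[mod (2 * m)%N])%Z].

Definition mod_orientation (m : nat) (beta : V -> int) (D : E -> bool) : Prop :=
  forall v, ((outdeg D v)%:Z - (indeg D v)%:Z = beta v %[mod m])%Z.

Definition strongly_connected (D : E -> bool) : Prop :=
  forall S : {set V}, S != set0 -> S != setT ->
    (0 < #|[set e | (tail D e \in S) && (head D e \notin S)]|)%N /\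
    (0 < #|[set e | (head D e \in S) && (tail D e \notin S)]|)%N.

(* Signed graph: sigma e = true means sigma(e) = +1, false means -1. *)
Definition pplus (sigma : E -> bool) (v : V) : nat :=
  #|[set e | sigma e && incident e v]|.

Definition circular_flow (sigma : E -> bool) (p q : nat)
    (D : E -> bool) (f : E -> int) : Prop :=
  [/\ forall e, sigma e -> (q <= `|f e|)%N && (`|f e| + q <= p)%N,
      forall e, ~~ sigma e ->
        (`|f e| + q <= p./2)%N || ((p./2 + q <= `|f e|)%N && (`|f e| < p)%N)
    & forall v, (\sum_(e | tail D e == v) f e - \sum_(e | head D e == v) f e
                 = 0 %[mod p])%Z].

(* phi_c(G, sigma) < r : the minimum of p/q over all circular p/q-flows
   (p, q positive, p even) is < r, i.e. some circular p/q-flow has p/q < r. *)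
Definition phi_c_lt (sigma : E -> bool) (r : rat) : Prop :=
  exists (p q : nat), [/\ (0 < p)%N, ~~ odd p, (0 < q)%N,
    (exists D f, circular_flow sigma p q D f) & p%:Q / q%:Q < r].

End Graph.

(* The graph 2G: edge set E * bool, both copies of e having e's endpoints. *)
Definition dbl_end {V E : Type} (en : E -> V) : E * bool -> V := fun x => en x.1.

From Pilot Require Import Defs.
From HB Require Import structures.
From mathcomp Require Import all_boot all_order all_algebra.
From mathcomp Require Import ring lra zify.
Import Order.TTheory GRing.Theory Num.Theory.
Set Implicit Arguments. Unset Strict Implicit. Unset Printing Implicit Defensive.
Local Open Scope ring_scope.

(* A strongly connected orientation D of 2G carries a circulation c that is
   positive on every arc: add up the arc multiplicities of one closed walk
   through each arc.  For N > max c the flow N - c along D takes values in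
   [1, N - 1] and has boundary N (d^+ - d^-), which by the two congruences on
   beta is 2kN p^+(v) modulo 4kN.  Folding the two copies of each edge into one
   value g(e) with |g(e)| <= 2N - 2 and adding 2kN on the positive edges
   gives a circular 4kN/(2kN - 2N + 2)-flow, and this ratio is below 2k/(k-1). *)

Lemma sum_count_mem (T : finType) (P : pred T) (s : seq T) :
  (\sum_(x | P x) count_mem x s)%N = count P s.
Proof.
elim: s => [|y s IH] /=; first by rewrite big1.
rewrite big_split /= IH; congr (_ + _)%N.
rewrite big_mkcond (bigD1 y) //= eqxx big1 ?addn0 => [|x /negbTE]; first by case: (P y).
by rewrite eq_sym => ->; case: (P x).
Qed.

Lemma card_set_sumz (T : finType) (P : pred T) :
  #|[set x | P x]|%:Z = \sum_x (P x)%:Z.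
Proof.
rewrite cardsE -sum1_card -natz natr_sum big_mkcond; apply: eq_bigr => x _.
by rewrite unfold_in; case: (P x).
Qed.

Section Digraph.
Variables (V A : finType) (tl hd : A -> V).

Definition boundary (f : A -> int) (v : V) : int :=
  \sum_(a | tl a == v) f a - \sum_(a | hd a == v) f a.

Lemma boundaryE f v :
  boundary f v = \sum_a f a * ((tl a == v)%:Z - (hd a == v)%:Z).
Proof.
rewrite /boundary !(big_mkcond (fun a => _ == v)) -sumrB.
by apply: eq_bigr => a _; case: (tl a == v); case: (hd a == v); rewrite /=; ring.
Qed.

Lemma boundaryD f g v :
  boundary (fun a => f a + g a) v = boundary f v + boundary g v.
Proof. by rewrite !boundaryE -big_split; apply: eq_bigr => a _; rewrite mulrDl. Qed.

Lemma boundaryB f g v :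
  boundary (fun a => f a - g a) v = boundary f v - boundary g v.
Proof. by rewrite !boundaryE -sumrB; apply: eq_bigr => a _; rewrite mulrBl. Qed.

Lemma boundaryZ (c : int) f v : boundary (fun a => c * f a) v = c * boundary f v.
Proof. by rewrite !boundaryE mulr_sumr; apply: eq_bigr => a _; rewrite mulrA. Qed.

Lemma boundary_const (n : int) v :
  boundary (fun=> n) v = n * (#|[set a | tl a == v]|%:Z - #|[set a | hd a == v]|%:Z).
Proof. by rewrite boundaryE !card_set_sumz -sumrB mulr_sumr. Qed.

Lemma boundary_count_mem s v :
  boundary (fun a => (count_mem a s)%:Z) v =
  (count (fun a => tl a == v) s)%:Z - (count (fun a => hd a == v) s)%:Z.
Proof.
by rewrite /boundary -!sum_count_mem !(big_morph Posz PoszD (erefl 0%:Z)).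
Qed.

Definition balanced (s : seq A) : Prop :=
  forall v, count (fun a => tl a == v) s = count (fun a => hd a == v) s.

Lemma balanced_flatten (ss : seq (seq A)) :
  (forall s, s \in ss -> balanced s) -> balanced (flatten ss).
Proof.
elim: ss => [|s ss IH] ss_bal v //=.
rewrite !count_cat (ss_bal s (mem_head _ _)) IH // => t t_ss.
by apply: ss_bal; rewrite inE t_ss orbT.
Qed.

Lemma boundary_sub_balanced (n : int) s v : balanced s ->
  boundary (fun a => n - (count_mem a s)%:Z) v =
  n * (#|[set a | tl a == v]|%:Z - #|[set a | hd a == v]|%:Z).
Proof.
by move=> s_bal; rewrite boundaryB boundary_const boundary_count_mem s_bal subrr subr0.
Qed.

Definition next_arc : rel A := fun a b => hd a == tl b.

Lemma count_path v x p : path next_arc x p ->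
  (count (fun a => tl a == v) (x :: p) + (hd (last x p) == v) =
   count (fun a => hd a == v) (x :: p) + (tl x == v))%N.
Proof.
elim: p x => [|y p IH] x /=; first by rewrite !addn0 addnC.
by case/andP=> /eqP xy /IH /=; rewrite -xy; lia.
Qed.

Lemma cycle_balanced s : cycle next_arc s -> balanced s.
Proof.
case: s => [|x p] //; rewrite /cycle rcons_path => /andP[x_p /eqP last_x] v.
by have := count_path v x_p; rewrite last_x => /addIn.
Qed.

Hypothesis out_cut : forall S : {set V}, S != set0 -> S != setT ->
  (0 < #|[set a | (tl a \in S) && (hd a \notin S)]|)%N.

Lemma cycle_through_arc a : exists s, cycle next_arc s && (a \in s).
Proof.
pose S := [set v | [exists b, connect next_arc a b && (hd b == v)]].
have reach_tl : tl a \in S.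
  apply: contraT => tl_notin_S.
  have S0 : S != set0.
    by apply/set0Pn; exists (hd a); rewrite inE; apply/existsP; exists a; rewrite connect0 eqxx.
  have ST : S != setT by apply: contraNneq tl_notin_S => ->; rewrite inE.
  have /card_gt0P[b] := out_cut S0 ST.
  rewrite !inE => /andP[/existsP[b' /andP[ab' /eqP b'b]]].
  case/existsP; exists b; rewrite eqxx andbT.
  by apply: connect_trans ab' (connect1 _); rewrite /next_arc b'b.
move: reach_tl; rewrite inE => /existsP[b /andP[/connectP[p a_p ->] /eqP last_a]].
by exists (a :: p); rewrite /cycle rcons_path a_p /next_arc last_a eqxx mem_head.
Qed.

Lemma exists_covering_balanced : exists s, balanced s /\ forall a, a \in s.
Proof.
have [cyc cycP] := fin_all_exists cycle_through_arc.
exists (flatten [seq cyc a | a <- enum A]); split.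
  by apply: balanced_flatten => _ /mapP[a _ ->]; apply: cycle_balanced; case/andP: (cycP a).
by move=> a; apply/flatten_mapP; exists a; [rewrite mem_enum | case/andP: (cycP a)].
Qed.

End Digraph.

Section SignedGraph.
Variables (V E : finType) (end1 end2 : E -> V).
Hypothesis noloop : forall e, end1 e != end2 e.

Definition fold_flow (D : E * bool -> bool) (F : E * bool -> int) (e : E) : int :=
  \sum_b (if D (e, b) then F (e, b) else - F (e, b)).

Lemma boundary_fold D F v :
  boundary end1 end2 (fold_flow D F) v =
  boundary (tail (dbl_end end1) (dbl_end end2) D)
           (Defs.head (dbl_end end1) (dbl_end end2) D) F v.
Proof.
have sum_pair (G : E * bool -> int) : \sum_x G x = \sum_e \sum_b G (e, b).
  by rewrite pair_big; apply: eq_bigr => -[].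
rewrite !boundaryE [RHS]sum_pair; apply: eq_bigr => e _.
rewrite /fold_flow !big_bool /tail /Defs.head /dbl_end /=.
by case: (D (e, true)); case: (D (e, false)); ring.
Qed.

Lemma norm_fold_flow D F (M : nat) e :
  (forall x, `|F x| <= M)%N -> (`|fold_flow D F e| <= 2 * M)%N.
Proof.
move=> F_le; rewrite /fold_flow big_bool /=.
have := F_le (e, true); have := F_le (e, false).
by case: (D (e, true)); case: (D (e, false)); lia.
Qed.

Variable sigma : E -> bool.

Lemma boundary_sign v :
  boundary end1 end2 (fun e => (sigma e)%:Z) v =
  (pplus end1 end2 sigma v)%:Z - 2 * #|[set e | sigma e && (end2 e == v)]|%:Z.
Proof.
rewrite boundaryE /pplus !card_set_sumz mulr_sumr -sumrB; apply: eq_bigr => e _.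
rewrite /incident; have := noloop e.
by case: (sigma e); case: (end1 e =P v) => [->|_]; case: (end2 e =P v) => [->|_];
  rewrite ?eqxx //=; ring.
Qed.

Lemma shifted_circular_flow (k N : nat) (g : E -> int) :
  (0 < k)%N -> (forall e, `|g e| + 2 <= 2 * N)%N ->
  (forall v, ((4 * (k * N))%N%:Z %|
              boundary end1 end2 g v + (2 * (k * N))%N%:Z * (pplus end1 end2 sigma v)%:Z)%Z) ->
  circular_flow end1 end2 sigma (4 * (k * N)) (2 * ((k - 1) * N) + 2) (fun=> true)
    (fun e => g e + (2 * (k * N))%N%:Z * (sigma e)%:Z).
Proof.
move=> k_gt0 g_le g_bd; split=> [e sigma_e | e /negbTE sigma_e | v].
- by rewrite sigma_e mulr1; apply/andP; split; have := g_le e; nia.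
- by rewrite sigma_e mulr0 addr0; apply/orP; left; have := g_le e; nia.
- change (boundary end1 end2 (fun e => g e + (2 * (k * N))%N%:Z * (sigma e)%:Z) v
          = 0 %[mod 4 * (k * N)])%Z.
  apply/eqP; rewrite eqz_mod_dvd subr0 boundaryD boundaryZ boundary_sign.
  set B := #|_|%:Z; rewrite mulrBr addrA rpredB //.
  have -> : (2 * (k * N))%N%:Z * (2 * B) = (4 * (k * N))%N%:Z * B by rewrite !PoszM; ring.
  exact: dvdz_mulr (dvdzz _).
Qed.

End SignedGraph.

Lemma shifted_flow_ratio_lt (R : realFieldType) (k N : nat) : (2 <= k)%N ->
  (4 * (k * N))%:R / (2 * ((k - 1) * N) + 2)%:R < (2 * k)%:R / (k%:R - 1) :> R.
Proof.
move=> k_ge2; have k1_gt0 : 0 < k%:R - 1 :> R by rewrite subr_gt0 ltr1n.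
rewrite ltr_pdivrMr ?ltr0n ?addn_gt0 ?orbT // mulrAC ltr_pdivlMr //.
rewrite natrD !natrM natrB; last lia.
have k_gt0 : 0 < k%:R :> R by rewrite ltr0n; lia.
nra.
Qed.

Lemma dvdz_scaled_congr (k N : nat) (d p : int) :
  (d = (2 * k)%N%:Z * p %[mod (4 * k)%N])%Z ->
  ((4 * (k * N))%N%:Z %| N%:Z * d + (2 * (k * N))%N%:Z * p)%Z.
Proof.
move/eqP; rewrite eqz_mod_dvd => /dvdzP[q d_eq]; apply/dvdzP; exists (q + p).
by rewrite -(subrK ((2 * k)%N%:Z * p) d) d_eq !PoszM; ring.
Qed.

Theorem theorem2p8 (k : nat) (V E : finType) (end1 end2 : E -> V)
  (noloop : forall e, end1 e != end2 e)
  (sigma : E -> bool) (beta : V -> int) :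
  (2 <= k)%N ->
  pc_boundary (dbl_end end1) (dbl_end end2) (2 * k) beta ->
  (forall v, (beta v = (2 * k)%N%:Z * (pplus end1 end2 sigma v)%:Z
                        %[mod (4 * k)%N])%Z) ->
  (exists D : E * bool -> bool,
      mod_orientation (dbl_end end1) (dbl_end end2) (4 * k) beta D /\
      strongly_connected (dbl_end end1) (dbl_end end2) D) ->
  phi_c_lt end1 end2 sigma ((2 * k)%N%:Q / (k%:Q - 1)).
Proof.
move=> k_ge2 _ beta_pplus [D [D_beta D_sc]].
have [s [s_bal s_cover]] := exists_covering_balanced (fun S S0 ST => (D_sc S S0 ST).1).
pose N := (size s).+1.
pose w x : int := N%:Z - (count_mem x s)%:Z.
have w_le x : (`|w x| <= size s)%N.
  have c_gt0 : (0 < count_mem x s)%N by rewrite -has_count has_pred1 s_cover.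
  move: c_gt0 (count_size (pred1 x) s); rewrite /w /N.
  (* [size s] occurs at two convertible but syntactically different types,
     which lia would read as two unrelated atoms. *)
  by move: (size s) (count_mem x s) => n c; lia.
exists (4 * (k * N))%N, (2 * ((k - 1) * N) + 2)%N; split.
- by rewrite !muln_gt0; lia.
- by rewrite oddM.
- by rewrite addn_gt0 orbT.
- exists (fun=> true); eexists.
  apply: (shifted_circular_flow noloop (g := fold_flow D w)) => [|e|v]; first lia.
    by have := norm_fold_flow D e w_le; lia.
  rewrite boundary_fold boundary_sub_balanced //; apply: dvdz_scaled_congr.
  exact: etrans (D_beta v) (beta_pplus v).
- exact: shifted_flow_ratio_lt.
Qed.
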